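(* Let $X$ be a compact metric space and $(f_n)_{n\ge1}$ a sequence of continuous maps $X\to X$. Then for all $p,q\in\mathbb{N}^*$ and all $x\in X$, $$f_1^{p+q}(x)=q\text{-}\lim_{n\to\infty}f_1^{p+n}(x).$$
   Context: $\mathbb{N}=\{1,2,\dots\}$, $\beta(\mathbb{N})$ the ultrafilters on $\mathbb{N}$, $\mathbb{N}^*$ the free ones. For $r\in\mathbb{N}^*$, $r\text{-}\lim_n x_n$ is the unique $y$ with $\{n:x_n\in V\}\in r$ for all neighbourhoods $V$ of $y$. $f_1^n=f_n\circ\cdots\circ f_1$ and $f_1^r(x)=r\text{-}\lim_n f_1^n(x)$ for $r\in\mathbb{N}^*$. Addition: $p+n=\{A:\{m:m+n\in A\}\in p\}$ and $p+q=\{A:\{n:\{m:m+n\in A\}\in p\}\in q\}$; for $p\in\mathbb{N}^*$ these are free ultrafilters. *)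

From HB Require Import structures.
From mathcomp Require Import all_boot all_order all_algebra.
From mathcomp Require Import all_classical all_reals all_analysis.
Set Implicit Arguments. Unset Strict Implicit. Unset Printing Implicit Defensive.
Import Order.TTheory GRing.Theory Num.Theory.
Local Open Scope classical_set_scope.

(* Ultrafilters on nat are [r : set_system nat] with [UltraFilter r] (library
   class).  Free ultrafilter: contains no singleton. Index 0 of nat plays no
   role for free ultrafilters. *)
Definition free_ultra (r : set_system nat) : Prop := forall n : nat, ~ r [set n].

Definition ushift (p : set_system nat) (n : nat) : set_system nat :=
  [set A | p [set m | A (m + n)%N]].
Definition usum (p q : set_system nat) : set_system nat :=
  [set A | q [set n | p [set m | A (m + n)%N]]].

(* r-lim_n u_n : the (unique, in a compact Hausdorff space) y such that
   {n | u n \in V} \in r for every neighbourhood V of y. *)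
Definition rlim {T : topologicalType} (r : set_system nat) (u : nat -> T) : T :=
  xget (u 0%N) [set y | forall V, nbhs y V -> r [set n | V (u n)]].

(* f_1^n = f_n o ... o f_1 (f_1^0 = id); f 0 is unused. *)
Fixpoint fcomp {T : Type} (f : nat -> T -> T) (n : nat) (x : T) : T :=
  match n with
  | 0%N => x
  | n'.+1 => f n'.+1 (fcomp f n' x)
  end.

Definition fulim {T : topologicalType} (f : nat -> T -> T) (r : set_system nat) (x : T) : T :=
  rlim r (fun n => fcomp f n x).

From HB Require Import structures.
From mathcomp Require Import all_boot all_order all_algebra.
From mathcomp Require Import all_classical all_reals all_analysis.
Local Open Scope classical_set_scope.

(* Both sides are limits of the same sequence u_k = f_1^k(x): the left one
   along p + q, the right one first along p (shifted by n) and then along q.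
   An ultrafilter limit exists in a compact space and is unique in a Hausdorff
   one, and the iterated limit is by construction a limit along p + q. *)

Lemma fmap_ultra {T U : Type} (f : T -> U) (F : set_system T) :
  UltraFilter F -> UltraFilter (f @ F).
Proof.
move=> UF; split=> [|G PG sfFG]; first exact: fmap_proper_filter.
rewrite predeqE => A; split=> [GA|]; last exact: sfFG.
have [//|FnA] := in_ultra_setVsetC (f @^-1` A) UF.
have GnA : G (~` A) by apply: sfFG.
by have /filter_ex [? []] : G (A `&` ~` A) by exact: filterI.
Qed.

Lemma ushift_ultra {p : set_system nat} (n : nat) :
  UltraFilter p -> UltraFilter (ushift p n).
Proof. exact: fmap_ultra. Qed.

Lemma usum_proper (p q : set_system nat) :
  ProperFilter p -> ProperFilter q -> ProperFilter (usum p q).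
Proof.
move=> Pp Pq; apply: Build_ProperFilter_ex.
  by move=> A; rewrite /usum/= => /filter_ex[n /filter_ex[m]]; exists (m + n)%N.
split=> [|A B|A B sAB]; rewrite /usum/=.
- by apply: filterS filterT => n _; exact: filterT.
- by move=> qA qB; apply: filterS (filterI qA qB) => n [pA pB]; exact: filterI.
- by apply: filterS => n; apply: filterS => m /sAB.
Qed.

Lemma cvg_usum {X : topologicalType} (p q : set_system nat)
    {Fp : Filter p} {Fq : Filter q} (u y : nat -> X) (z : X) :
  (forall n, u @ ushift p n --> y n) -> y @ q --> z ->
  u @ usum p q --> z.
Proof.
move=> uy yz V; rewrite nbhsE => -[U [oU Uz] sUV].
have : q [set n | U (y n)] by apply: yz; exact: open_nbhs_nbhs.
apply: filterS => n Uyn.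
have : p [set m | U (u (m + n)%N)] by apply: uy; exact: open_nbhs_nbhs.
by apply: filterS => m /sUV.
Qed.

Lemma rlim_cvg {X : topologicalType} (r : set_system nat) (u : nat -> X) :
  compact [set: X] -> UltraFilter r -> u @ r --> rlim r u.
Proof.
rewrite compact_ultra => cX Ur.
have [y [_ uy]] := cX _ (fmap_ultra u r Ur) filterT.
by apply: (@xgetPex _ _ [set y | u @ r --> y]); exists y.
Qed.

Lemma rlim_eq {X : topologicalType} (r : set_system nat) (u : nat -> X) (y : X) :
  hausdorff_space X -> ProperFilter r -> u @ r --> y -> rlim r u = y.
Proof.
move=> hX Pr uy; apply: (@xget_subset1 _ _ [set y | u @ r --> y] _ uy).
exact: (@cvg_unique _ hX _ (fmap_proper_filter u Pr)).
Qed.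

Theorem lemma3p8 (R : realType) (X : metricType R)
    (cX : compact [set: X]) (f : nat -> X -> X)
    (fc : forall n : nat, (0 < n)%N -> continuous (f n))
    (p q : set_system nat) (Up : UltraFilter p) (Uq : UltraFilter q)
    (fp : free_ultra p) (fq : free_ultra q) (x : X) :
  fulim f (usum p q) x = rlim q (fun n => fulim f (ushift p n) x).
Proof.
apply: rlim_eq; [exact: metric_hausdorff | exact: usum_proper |].
apply: cvg_usum (rlim_cvg q (fun n => fulim f (ushift p n) x) cX Uq) => n.
exact: (rlim_cvg (ushift p n) (fun m => fcomp f m x) cX (ushift_ultra n Up)).
Qed.
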